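(* For each $n\ge1$ there is a bijection $\psi$ from the set of plane trees with $n$ edges to $\mathfrak S_n(132)$ such that, for every such tree $T$ and $\pi=\psi(T)$: (1) the number of young leaves of $T$ equals the number of double descents of the permutation $(n+1)\pi=(n+1,\pi_1,\dots,\pi_n)$; (2) the number of old leaves of $T$ equals the number of ascending runs of the permutation $\pi(n+1)=(\pi_1,\dots,\pi_n,n+1)$.
   Context: A plane tree is a rooted tree in which the children of each vertex are linearly ordered. A leaf is a vertex with no children; the one-vertex tree has no leaves. A leaf is old if it is the leftmost child of its parent, young otherwise. $\mathfrak S_n(132)$ is the set of permutations of $\{1,\dots,n\}$ with no indices $a<b<c$ such that $\pi_a<\pi_c<\pi_b$. For a sequence $\sigma$, a double descent is an index $i$ with $\sigma_i>\sigma_{i+1}>\sigma_{i+2}$, a double ascent is an index $i$ with $\sigma_i<\sigma_{i+1}<\sigma_{i+2}$, and an ascending run is a maximal increasing sequence $\sigma_i<\sigma_{i+1}<\cdots<\sigma_{i+k}$ of consecutive entries with $k\ge1$. *)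

From mathcomp Require Import all_boot all_fingroup.
Set Implicit Arguments. Unset Strict Implicit. Unset Printing Implicit Defensive.

Inductive ptree : Type := Node : seq ptree -> ptree.

Definition is_leaf (t : ptree) : bool := if t is Node [::] then true else false.

Fixpoint edges (t : ptree) : nat :=
  let: Node ts := t in
  (fix f (l : seq ptree) : nat :=
     if l is u :: l' then (edges u).+1 + f l' else 0) ts.

(* old leaves: leaves that are the leftmost child of their parent *)
Fixpoint old_leaves (t : ptree) : nat :=
  let: Node ts := t in
  (if ts is u :: _ then is_leaf u else false) +
  (fix f (l : seq ptree) : nat :=
     if l is u :: l' then old_leaves u + f l' else 0) ts.

(* young leaves: leaves that are not the leftmost child of their parent *)
Fixpoint young_leaves (t : ptree) : nat :=
  let: Node ts := t in
  count is_leaf (behead ts) +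
  (fix f (l : seq ptree) : nat :=
     if l is u :: l' then young_leaves u + f l' else 0) ts.

Definition avoids132 n (p : 'S_n) : bool :=
  ~~ [exists a : 'I_n, exists b : 'I_n, exists c : 'I_n,
        [&& a < b, b < c, p a < p c & p c < p b]].

(* one-line notation pi_1 ... pi_n with values in {1..n} *)
Definition oneline n (p : 'S_n) : seq nat := [seq (p i : nat).+1 | i <- enum 'I_n].

Definition ddes (s : seq nat) : nat :=
  count (fun i => (nth 0 s i > nth 0 s i.+1) && (nth 0 s i.+1 > nth 0 s i.+2))
        (iota 0 (size s - 2)).

(* number of ascending runs: maximal increasing runs of consecutive entries
   of length >= 2, counted by their starting index i: s_i < s_(i+1) and
   (i = 0 or s_(i-1) >= s_i) *)
Definition asc_runs (s : seq nat) : nat :=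
  count (fun i => (nth 0 s i < nth 0 s i.+1) &&
                  ((i == 0) || (nth 0 s i.-1 >= nth 0 s i)))
        (iota 0 (size s).-1).

From mathcomp Require Import all_boot all_fingroup.
From mathcomp Require Import zify.
Set Implicit Arguments. Unset Strict Implicit. Unset Printing Implicit Defensive.

(* Cutting a plane tree T at the first child c of its root gives its word
     w(T) = (w(T') shifted up by e+1) ++ w(c) ++ [e+1],   e = edges c,
   where T' is T without c. Every entry before w(c) exceeds the last entry
   e+1 and every entry of w(c) is below it, which is exactly how a
   132-avoiding permutation of {1..n} splits around its last entry; hence w
   is a bijection onto S_n(132), inverted by splitting at the last entry.
   Cutting T instead at the last child S of its root gives
     w(T) = (w(S) shifted up by edges T') ++ [n] ++ w(T'),
   where T' is T without S, and both statistics split along this cut. In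
   w(T) the entry n is preceded by a smaller entry unless S is a leaf, when
   it comes first, and followed by a smaller entry unless T' is a single
   vertex, when it comes last. So n creates a double descent of (n+1)w(T)
   exactly when S is a young leaf, and starts a new ascending run of
   w(T)(n+1) exactly when S is an old leaf. *)

(** * Double descents and ascending runs *)

Lemma ddes_cons x s :
  ddes (x :: s) = (if s is y :: z :: _ then (x > y) && (y > z) else false) + ddes s.
Proof.
case: s => [|y [|z t]] //; rewrite /ddes /= subn2 -[1]/(1 + 0) iotaDl count_map.
by congr (_ + _); apply: eq_count => i; rewrite /= add1n.
Qed.

(* [fresh] tells whether a run may start at the head of [s], i.e. whether the
   entry preceding it (if any) is not smaller. *)
Fixpoint asc_runs_rec (fresh : bool) (s : seq nat) : nat :=
  match s with
  | x :: ((y :: _) as t) => (fresh && (x < y)) + asc_runs_rec (y <= x) t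
  | _ => 0
  end.

Lemma asc_runs_rec_cons2 fresh x y t :
  asc_runs_rec fresh [:: x, y & t] = (fresh && (x < y)) + asc_runs_rec (y <= x) (y :: t).
Proof. by []. Qed.

Lemma asc_runs_recE fresh s :
  asc_runs_rec fresh s =
  count (fun i => (nth 0 s i < nth 0 s i.+1) &&
                  (if i is j.+1 then nth 0 s i <= nth 0 s j else fresh))
        (iota 0 (size s).-1).
Proof.
elim: s fresh => [|x [|y t] IH] fresh //.
rewrite asc_runs_rec_cons2 IH /= -[1]/(1 + 0) iotaDl count_map andbC.
by congr (_ + _); apply: eq_count => -[|i].
Qed.

Lemma asc_runsE s : asc_runs s = asc_runs_rec true s.
Proof. by rewrite asc_runs_recE; apply: eq_count => -[|i] /=; rewrite ?andbT. Qed.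

Lemma ddes_shift b s : ddes (map (addn b) s) = ddes s.
Proof.
elim: s => // x s IH; rewrite map_cons !ddes_cons IH.
by case: s {IH} => [|y [|z t]] //=; rewrite !ltn_add2l.
Qed.

Lemma ddes_cat_ascent x u y v : last x u < y ->
  ddes (x :: u ++ y :: v) = ddes (x :: u) + ddes (y :: v).
Proof.
elim: u x => [|x2 u IH] x /= ltxy.
  by rewrite ddes_cons ltnNge (ltnW ltxy) [ddes [:: x]]ddes_cons; case: v.
rewrite ddes_cons IH // [ddes [:: x, x2 & u]]ddes_cons addnA.
by case: u {IH} ltxy => [|z u] //= ltx2y; rewrite [y < x2]ltnNge (ltnW ltx2y) andbF.
Qed.

Lemma asc_runs_rec_shift b fresh s :
  asc_runs_rec fresh (map (addn b) s) = asc_runs_rec fresh s.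
Proof.
elim: s fresh => [|x [|y t] IH] fresh //.
by rewrite !map_cons asc_runs_rec_cons2 -map_cons IH ltn_add2l leq_add2l.
Qed.

Lemma asc_runs_rec_cat_descent fresh x u y v : y <= last x u ->
  asc_runs_rec fresh (x :: u ++ y :: v) =
  asc_runs_rec fresh (x :: u) + asc_runs_rec true (y :: v).
Proof.
elim: u x fresh => [|x2 u IH] x fresh leyx.
  by rewrite cat0s asc_runs_rec_cons2 leyx ltnNge leyx andbF.
by rewrite cat_cons asc_runs_rec_cons2 -cat_cons IH // asc_runs_rec_cons2 addnA.
Qed.

Lemma asc_runs_rec_extend_ascent fresh u x y z : x < y -> y < z ->
  asc_runs_rec fresh (u ++ [:: x; y; z]) = asc_runs_rec fresh (u ++ [:: x; y]).
Proof.
move=> ltxy ltyz; elim: u fresh => [|w u IH] fresh.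
  by rewrite /= [y <= x]leqNgt ltxy.
case: u IH => [|a u] IH; first by rewrite /= [y <= x]leqNgt ltxy.
by rewrite !cat_cons !asc_runs_rec_cons2 -!cat_cons IH.
Qed.

(** * Plane trees *)

Lemma ptree_cons_ind (P : ptree -> Prop) : P (Node [::]) ->
  (forall c ts, P c -> P (Node ts) -> P (Node (c :: ts))) -> forall T, P T.
Proof.
move=> Pleaf Pcons; fix IH 1 => -[ts].
elim: ts => [|c ts IHts]; [exact: Pleaf | exact: (Pcons c ts (IH c) IHts)].
Qed.

Lemma edgesE ts : edges (Node ts) = sumn [seq (edges u).+1 | u <- ts].
Proof. by elim: ts => //= u ts ->. Qed.

Lemma young_leavesE ts :
  young_leaves (Node ts) = count is_leaf (behead ts) + sumn (map young_leaves ts).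
Proof. by rewrite /=; congr (_ + _); elim: ts => //= u ts ->. Qed.

Lemma old_leavesE ts : old_leaves (Node ts) =
  (if ts is u :: _ then is_leaf u else false) + sumn (map old_leaves ts).
Proof. by rewrite /=; congr (_ + _); elim: ts => //= u ts ->. Qed.

Lemma edges_cons c ts : edges (Node (c :: ts)) = (edges c).+1 + edges (Node ts).
Proof. by []. Qed.

Lemma edges_rcons ts S : edges (Node (rcons ts S)) = (edges (Node ts) + edges S).+1.
Proof. by rewrite !edgesE map_rcons -cats1 sumn_cat /= addn0 addnS. Qed.

Lemma young_leaves_rcons ts S : young_leaves (Node (rcons ts S)) =
  young_leaves (Node ts) + young_leaves S + ((0 < size ts) && is_leaf S).
Proof.
rewrite !young_leavesE map_rcons -!cats1 sumn_cat /=.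
by case: ts => [|t ts] /=; rewrite ?count_cat /=; lia.
Qed.

Lemma old_leaves_rcons ts S : old_leaves (Node (rcons ts S)) =
  old_leaves (Node ts) + old_leaves S + ((size ts == 0) && is_leaf S).
Proof.
rewrite !old_leavesE map_rcons -!cats1 sumn_cat /=.
by case: ts => [|t ts] /=; lia.
Qed.

Lemma is_leafE T : is_leaf T = (edges T == 0).
Proof. by case: T => -[]. Qed.

Lemma edges_eq0 T : edges T = 0 -> T = Node [::].
Proof. by case: T => -[]. Qed.

Lemma ptree_rcons_ind (P : ptree -> Prop) : P (Node [::]) ->
  (forall ts S, P (Node ts) -> P S -> P (Node (rcons ts S))) -> forall T, P T.
Proof.
move=> Pleaf Prcons T; elim: (edges T).+1 {-2}T (ltnSn (edges T)) => // m IH [ts].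
case/lastP: ts => [|ts S] //; rewrite edges_rcons ltnS => lt_m.
by apply: Prcons; apply: IH; lia.
Qed.

(** * 132-avoiding sequences *)

Lemma filter_all_predC T (a : pred T) s : all (predC a) s -> filter a s = [::].
Proof. by elim: s => //= x s IH /andP[/negbTE-> /IH]. Qed.

Lemma cat_filter_predC T (x0 : T) (P : pred T) s :
  (forall i j, i < j < size s -> P (nth x0 s j) -> P (nth x0 s i)) ->
  [seq x <- s | P x] ++ [seq x <- s | predC P x] = s.
Proof.
elim: s => //= x s IH Pprefix; case Px: (P x) => /=.
  by rewrite IH // => i j ltij; apply: (Pprefix i.+1 j.+1).
have notPs : all (predC P) s.
  apply/(all_nthP x0) => j ltj /=; apply/negP => Pj.
  by have := Pprefix 0 j.+1; rewrite /= Px ltnS ltj => /(_ isT Pj).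
by rewrite (all_filterP notPs) filter_all_predC.
Qed.

Definition seq_avoids132 (s : seq nat) : Prop :=
  forall i j k, i < j < k -> k < size s -> ~~ (nth 0 s i < nth 0 s k < nth 0 s j).

Lemma seq_avoids132_shift b s :
  seq_avoids132 (map (addn b) s) <-> seq_avoids132 s.
Proof.
have nth_shift i : i < size s -> nth 0 (map (addn b) s) i = b + nth 0 s i.
  by move=> lti; rewrite (nth_map 0).
split=> av i j k /andP[lij ljk] lk; rewrite ?size_map in lk.
  by have := av i j k; rewrite lij ljk size_map !nth_shift ?ltn_add2l //; lia.
by rewrite !nth_shift ?ltn_add2l ?av ?lij; lia.
Qed.

Lemma seq_avoids132_catl A C : seq_avoids132 (A ++ C) -> seq_avoids132 A.
Proof.
move=> av i j k /andP[lij ljk] lk; have := av i j k.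
by rewrite lij ljk size_cat ltn_addr // !nth_cat lk !ifT //; lia.
Qed.

Lemma seq_avoids132_catr A C : seq_avoids132 (A ++ C) -> seq_avoids132 C.
Proof.
move=> av i j k /andP[lij ljk] lk.
have := av (size A + i) (size A + j) (size A + k).
rewrite !ltn_add2l lij ljk size_cat ltn_add2l lk !nth_cat !ifF ?addKn //; lia.
Qed.

Lemma seq_avoids132_cat A C : seq_avoids132 A -> seq_avoids132 C ->
  {in A & C, forall x y, y < x} -> seq_avoids132 (A ++ C).
Proof.
move=> avA avC gtAC i j k /andP[lij ljk]; rewrite size_cat !nth_cat => lk.
have [ltkA | leAk] := ltnP k (size A).
  by rewrite !ifT ?avA ?lij //; lia.
have [ltiA | leAi] := ltnP i (size A).
  have ltkC : k - size A < size C by lia.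
  have ltki : nth 0 C (k - size A) < nth 0 A i by apply: gtAC; exact: mem_nth.
  by rewrite ltnNge (ltnW ltki).
by rewrite !ifF ?avC //; lia.
Qed.

Lemma seq_avoids132_rcons B a : seq_avoids132 B -> {in B, forall x, x < a} ->
  seq_avoids132 (rcons B a).
Proof.
move=> avB ltBa i j k /andP[lij ljk]; rewrite size_rcons ltnS !nth_rcons => lk.
have [ltkB | ] := ltnP k (size B); first by rewrite !ifT ?avB ?lij //; lia.
have ltjB : j < size B by lia.
move=> leBk; have -> : k == size B by rewrite eqn_leq lk.
by rewrite ltjB [a < _]ltnNge (ltnW (ltBa _ (mem_nth 0 ltjB))) andbF.
Qed.

Lemma seq_avoids132_split_last s a : uniq (rcons s a) -> seq_avoids132 (rcons s a) ->
  [seq x <- s | a < x] ++ [seq x <- s | x < a] = s.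
Proof.
rewrite rcons_uniq => /andP[notin_a _] av.
rewrite -[RHS](@cat_filter_predC _ 0 (fun x => a < x)).
  congr (_ ++ _); apply: eq_in_filter => x xs /=.
  have neq_xa : x != a by apply: contraNneq notin_a => <-.
  by rewrite -leqNgt ltn_neqAle neq_xa.
(* an entry below a followed by an entry above a would form a 132 with a *)
move=> i j /andP[lij ljs] ltaj; apply: contraT; rewrite -leqNgt => leia.
have := av i j (size s); rewrite lij ljs size_rcons ltnSn !nth_rcons ltnn eqxx.
rewrite ljs (ltn_trans lij ljs).
rewrite ltaj ltn_neqAle leia !andbT negbK => /(_ isT isT) /eqP eq_ia.
by move: notin_a; rewrite -eq_ia mem_nth // (ltn_trans lij ljs).
Qed.

(** * The word of a plane tree *)

Fixpoint word (T : ptree) : seq nat :=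
  let: Node ts := T in
  (fix word_forest (l : seq ptree) : seq nat :=
     if l is c :: l' then
       map (addn (edges c).+1) (word_forest l') ++ rcons (word c) (edges c).+1
     else [::]) ts.

Lemma word_cons c ts : word (Node (c :: ts)) =
  map (addn (edges c).+1) (word (Node ts)) ++ rcons (word c) (edges c).+1.
Proof. by []. Qed.

Lemma word_rcons ts S : word (Node (rcons ts S)) =
  map (addn (edges (Node ts))) (word S) ++ edges (Node (rcons ts S)) :: word (Node ts).
Proof.
elim: ts => [|c ts IH]; first by rewrite /= (eq_map add0n) map_id cats1 addn0.
rewrite rcons_cons !word_cons IH map_cat -map_comp -catA.
by congr (_ ++ _); apply: eq_map => x /=; rewrite addnA.
Qed.

Lemma perm_iota_word T : perm_eq (word T) (iota 1 (edges T)).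
Proof.
elim/ptree_cons_ind: T => // c ts IHc IHts.
have iota_a : iota 1 (edges c).+1 = rcons (iota 1 (edges c)) (edges c).+1.
  by rewrite -cats1 -[(edges c).+1]addn1 iotaD /= add1n addn1.
rewrite word_cons edges_cons iotaD iota_a perm_catC.
apply: perm_cat; first by rewrite -!cats1 perm_cat2r.
by rewrite addnC iotaDl perm_map.
Qed.

Lemma size_word T : size (word T) = edges T.
Proof. by rewrite (perm_size (perm_iota_word T)) size_iota. Qed.

Lemma mem_word T x : x \in word T -> 0 < x <= edges T.
Proof. by rewrite (perm_mem (perm_iota_word T)) mem_iota add1n ltnS. Qed.

Lemma word_avoids132 T : seq_avoids132 (word T).
Proof.
elim/ptree_cons_ind: T => [|c ts avc avts]; first by move=> i j k _.
rewrite word_cons; apply: seq_avoids132_cat.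
- exact/seq_avoids132_shift.
- by apply: seq_avoids132_rcons => // x /mem_word; lia.
- move=> _ y /mapP[x /mem_word x_pos ->]; rewrite mem_rcons inE.
  by case/predU1P => [-> | /mem_word]; lia.
Qed.

Lemma word_eq_nil T : (word T == [::]) = (edges T == 0).
Proof. by rewrite -size_eq0 size_word. Qed.

Lemma young_leaves_word T N : edges T < N -> young_leaves T = ddes (N :: word T).
Proof.
elim/ptree_rcons_ind: T N => [|ts S IHts IHS] N //.
rewrite edges_rcons young_leaves_rcons word_rcons edges_rcons => lt_N.
set e := edges (Node ts); set E := (e + edges S).+1.
case W: (word S) => [|x u].
  have S0 : edges S = 0 by apply/eqP; rewrite -word_eq_nil W.
  have -> : young_leaves S = 0 by rewrite (edges_eq0 S0).
  rewrite is_leafE S0 andbT addn0 [map _ _]/= cat0s ddes_cons.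
  rewrite -(IHts E); last by rewrite /E; lia.
  rewrite addnC.
  case Wts: (word (Node ts)) => [|z w].
    by move/eqP: Wts; rewrite word_eq_nil => /eqP/edges_eq0[->].
  have z_range : 0 < z <= e by apply: mem_word; rewrite Wts mem_head.
  have -> : 0 < size ts by move: z_range; rewrite /e; case: (ts) => //=; lia.
  by rewrite [(E < N) && _](_ : _ = true) //; apply/andP; rewrite /E; split; lia.
have S_nonleaf : is_leaf S = false by rewrite is_leafE -word_eq_nil W.
rewrite S_nonleaf andbF addn0 addnC map_cons ddes_cat_ascent; last first.
  have : 0 < last x u <= edges S by apply: mem_word; rewrite W mem_last.
  by rewrite [last N _]/= last_map /E; lia.
rewrite -IHts; last by rewrite /E; lia.
have le_eN : e <= N by rewrite /E in lt_N; lia.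
by rewrite -(subnKC le_eN) -!map_cons ddes_shift -W -IHS //; lia.
Qed.

Lemma old_leaves_word T N : edges T < N -> old_leaves T = asc_runs (rcons (word T) N).
Proof.
rewrite asc_runsE.
elim/ptree_rcons_ind: T N => [|ts S IHts IHS] N //.
rewrite edges_rcons old_leaves_rcons word_rcons edges_rcons rcons_cat rcons_cons => lt_N.
case Wts: (word (Node ts)) => [|z w].
  move/eqP: Wts; rewrite word_eq_nil => /eqP/edges_eq0[ts0].
  rewrite ts0 in lt_N *; rewrite [edges (Node [::])]/= add0n (eq_map add0n) map_id.
  case/lastP WS: (word S) => [|u x].
    have S0 : edges S = 0 by apply/eqP; rewrite -word_eq_nil WS.
    by rewrite (edges_eq0 S0) /=; rewrite S0 in lt_N; rewrite lt_N.
  have S_nonleaf : is_leaf S = false by rewrite is_leafE -word_eq_nil WS; case: (u).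
  have x_range : 0 < x <= edges S by apply: mem_word; rewrite WS mem_rcons mem_head.
  rewrite S_nonleaf andbF addn0 cat_rcons asc_runs_rec_extend_ascent; try lia.
  by rewrite (IHS (edges S).+1) // WS -cats1 cat_rcons.
set e := edges (Node ts); set E := (e + edges S).+1.
have z_range : 0 < z <= e by apply: mem_word; rewrite Wts mem_head.
have -> : (size ts == 0) = false by move: z_range; rewrite /e; case: (ts) => //=; lia.
rewrite andFb addn0 (IHts N) ?Wts; last by rewrite /E in lt_N; lia.
have le_zE : z <= E by rewrite /E; lia.
case WS: (word S) => [|x u].
  have S0 : edges S = 0 by apply/eqP; rewrite -word_eq_nil WS.
  have -> : old_leaves S = 0 by rewrite (edges_eq0 S0).
  by rewrite [map _ _]/= cat0s rcons_cons asc_runs_rec_cons2 ltnNge le_zE addn0.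
rewrite map_cons -(cat1s E) catA asc_runs_rec_cat_descent; last by rewrite last_cat.
rewrite addnC (IHS (edges S).+1) // WS rcons_cons -cats1 -(asc_runs_rec_shift e).
by rewrite map_cons map_cat /E /= addnS.
Qed.

(** * Decoding a 132-avoiding permutation *)

Lemma filter_iota_gtn a n : a <= n ->
  [seq x <- iota 1 n | a < x] = map (addn a) (iota 1 (n - a)).
Proof.
move=> le_an; have -> : iota 1 n = iota 1 a ++ iota (1 + a) (n - a).
  by rewrite -iotaD subnKC.
rewrite filter_cat filter_all_predC; last by apply/allP => x; rewrite mem_iota /=; lia.
rewrite (all_filterP _); last by apply/allP => x; rewrite mem_iota; lia.
by rewrite addnC iotaDl.
Qed.

Lemma perm_iota_filter_ltn s n a : perm_eq s (iota 1 n) -> 0 < a <= n ->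
  perm_eq [seq x <- s | x < a] (iota 1 a.-1).
Proof.
move=> perm_s /andP[a_pos le_an].
rewrite -(filter_iota_ltn 1 (n := n) (j := a.-1)) ?(leq_trans (leq_pred a)) //.
by rewrite (add1n a.-1) (prednK a_pos) perm_filter.
Qed.

Lemma perm_iota_filter_gtn s n a : perm_eq s (iota 1 n) -> a <= n ->
  perm_eq [seq x - a | x <- s & a < x] (iota 1 (n - a)).
Proof.
move=> perm_s le_an; have := perm_map (subn^~ a) (perm_filter (fun x => a < x) perm_s).
by rewrite filter_iota_gtn // -map_comp (eq_map (addKn a)) map_id.
Qed.

Lemma map_addn_subn_filter a s :
  map (addn a) [seq x - a | x <- s & a < x] = [seq x <- s | a < x].
Proof.
rewrite -map_comp; apply: map_id_in => x.
by rewrite mem_filter => /andP[/ltnW le_ax _] /=; rewrite subnKC.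
Qed.

(* The first argument is fuel: it must exceed the length of the sequence. *)
Fixpoint tree_of (k : nat) (s : seq nat) : ptree :=
  if k is k'.+1 then
    if s is [::] then Node [::] else
    let a := last 0 s in
    let: Node ts := tree_of k' [seq x - a | x <- s & a < x] in
    Node (tree_of k' [seq x <- s | x < a] :: ts)
  else Node [::].

Lemma tree_of_rcons k s a : tree_of k.+1 (rcons s a) =
  let: Node ts := tree_of k [seq x - a | x <- rcons s a & a < x] in
  Node (tree_of k [seq x <- rcons s a | x < a] :: ts).
Proof. by case: s => [|x s] //=; rewrite last_rcons. Qed.

Lemma tree_of_word k T : edges T < k -> tree_of k (word T) = T.
Proof.
elim: k T => // k IH; case=> -[|c ts] // lt_k.
rewrite word_cons -rcons_cat tree_of_rcons; set a := (edges c).+1.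
set A := map (addn a) _.
have gt_A : all (fun x => a < x) A.
  by apply/allP => _ /mapP[x /mem_word x_pos ->]; lia.
have lt_c : all (fun x => x < a) (word c).
  by apply/allP => x /mem_word; lia.
rewrite !filter_rcons ltnn !filter_cat (all_filterP gt_A) (all_filterP lt_c).
rewrite !filter_all_predC; first last.
- by apply: sub_all lt_c => x /=; rewrite -leqNgt => /ltnW.
- by apply: sub_all gt_A => x /=; rewrite -leqNgt => /ltnW.
rewrite cats0 cat0s -map_comp (eq_map (addKn a)) map_id.
by rewrite !IH //; move: lt_k; rewrite edges_cons; lia.
Qed.

Lemma word_tree_of k s : size s < k -> perm_eq s (iota 1 (size s)) ->
  seq_avoids132 s -> word (tree_of k s) = s.
Proof.
elim: k s => // k IH; case/lastP => [|s a] // lt_k perm_s av_s.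
rewrite tree_of_rcons; set n := size (rcons s a) in lt_k perm_s.
have a_range : 0 < a <= n by rewrite -mem_iota -(perm_mem perm_s) mem_rcons mem_head.
set A := [seq x <- rcons s a | a < x]; set B := [seq x <- rcons s a | x < a].
have split_s : rcons s a = A ++ rcons B a.
  rewrite /A /B !filter_rcons ltnn -rcons_cat seq_avoids132_split_last //.
  by rewrite (perm_uniq perm_s) iota_uniq.
have perm_B : perm_eq B (iota 1 a.-1) by apply: perm_iota_filter_ltn perm_s _.
have perm_A' := perm_iota_filter_gtn perm_s (proj2 (andP a_range)).
have av_A : seq_avoids132 A by move: av_s; rewrite split_s => /seq_avoids132_catl.
have av_B : seq_avoids132 B.
  by move: av_s; rewrite split_s -cats1 => /seq_avoids132_catr/seq_avoids132_catl.
have size_B : size B = a.-1 by rewrite (perm_size perm_B) size_iota.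
have word_B : word (tree_of k B) = B.
  by apply: IH; rewrite ?size_B //; lia.
set A' := [seq x - a | x <- rcons s a & a < x] in perm_A' *.
have word_A' : word (tree_of k A') = A'.
  apply: IH; rewrite ?(perm_size perm_A') ?size_iota //; first lia.
  by apply/(seq_avoids132_shift a); rewrite /A' map_addn_subn_filter.
case: (tree_of k A') word_A' => ts word_A'.
have edges_B : (edges (tree_of k B)).+1 = a.
  by rewrite -size_word word_B size_B prednK //; case/andP: a_range.
by rewrite word_cons word_A' edges_B /A' map_addn_subn_filter -/A word_B -split_s.
Qed.

Lemma size_oneline n (p : 'S_n) : size (oneline p) = n.
Proof. by rewrite size_map size_enum_ord. Qed.

Lemma nth_oneline n (p : 'S_n) (i : 'I_n) : nth 0 (oneline p) i = (p i).+1.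
Proof. by rewrite (nth_map i) ?size_enum_ord // nth_ord_enum. Qed.

Lemma oneline_inj n : injective (@oneline n).
Proof.
move=> p q eq_pq; apply/permP => i; apply/val_inj/succn_inj.
by rewrite -!nth_oneline eq_pq.
Qed.

Lemma uniq_perm_iota s : uniq s -> {subset s <= [pred x | 0 < x <= size s]} ->
  perm_eq s (iota 1 (size s)).
Proof.
move=> uniq_s s_range; apply: uniq_perm; rewrite ?iota_uniq //.
have [] := uniq_min_size uniq_s (s2 := iota 1 (size s)) _ _ => //.
- by move=> x /s_range; rewrite mem_iota /= add1n ltnS.
- by rewrite size_iota.
Qed.

Lemma perm_iota_oneline n (p : 'S_n) : perm_eq (oneline p) (iota 1 n).
Proof.
rewrite -{2}(size_oneline p); apply: uniq_perm_iota.
  by rewrite map_inj_uniq ?enum_uniq // => i j /succn_inj/val_inj/perm_inj.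
by move=> _ /mapP[i _ ->]; rewrite size_oneline inE /= ltn_ord.
Qed.

Lemma oneline_avoids132 n (p : 'S_n) : avoids132 p <-> seq_avoids132 (oneline p).
Proof.
split=> [/existsPn avp i j k /andP[lij ljk] lkn | avs].
  rewrite size_oneline in lkn.
  have lin : i < n by lia.
  have ljn : j < n by lia.
  rewrite (nth_oneline p (Ordinal lin)) (nth_oneline p (Ordinal ljn)).
  rewrite (nth_oneline p (Ordinal lkn)) !ltnS.
  have /existsPn/(_ (Ordinal ljn))/existsPn/(_ (Ordinal lkn)) := avp (Ordinal lin).
  by rewrite /= lij ljk.
apply/existsPn => i; apply/existsPn => j; apply/existsPn => k.
apply/negP => /and4P[lij ljk ltik ltkj]; have := avs i j k.
by rewrite lij ljk size_oneline ltn_ord !nth_oneline !ltnS ltik ltkj => /(_ isT isT).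
Qed.

Lemma perm_of_seq n s : perm_eq s (iota 1 n) -> {p : 'S_n | oneline p = s}.
Proof.
move=> perm_s.
have size_s : size s = n by rewrite (perm_size perm_s) size_iota.
have s_range (i : 'I_n) : 0 < nth 0 s i <= n.
  by rewrite -mem_iota -(perm_mem perm_s) mem_nth // size_s.
have s_pos (i : 'I_n) : 0 < nth 0 s i by case/andP: (s_range i).
have lt_pred (i : 'I_n) : (nth 0 s i).-1 < n by have := s_range i; lia.
have f_inj : injective (fun i => Ordinal (lt_pred i)).
  move=> i j [] /(congr1 succn); rewrite !prednK // => /eqP.
  by rewrite nth_uniq ?size_s // ?(perm_uniq perm_s) ?iota_uniq // => /eqP/val_inj.
exists (perm f_inj); apply: (@eq_from_nth _ 0); rewrite size_oneline ?size_s // => i lt_in.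
by rewrite (nth_oneline _ (Ordinal lt_in)) permE /= prednK // (s_pos (Ordinal lt_in)).
Qed.

Lemma edges_sig_inj n (T1 T2 : {T : ptree | edges T = n}) : sval T1 = sval T2 -> T1 = T2.
Proof.
by case: T1 T2 => [T eT] [T' eT'] /= eqTT'; subst T'; rewrite (eq_irrelevance eT eT').
Qed.

Section TreePermBijection.

Variable n : nat.

Lemma perm_iota_word_sig (T : {T : ptree | edges T = n}) : perm_eq (word (sval T)) (iota 1 n).
Proof. by case: T => T /= <-; apply: perm_iota_word. Qed.

Definition tree_perm (T : {T : ptree | edges T = n}) : 'S_n :=
  sval (perm_of_seq (perm_iota_word_sig T)).

Lemma oneline_tree_perm T : oneline (tree_perm T) = word (sval T).
Proof. exact: (svalP (perm_of_seq (perm_iota_word_sig T))). Qed.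

Lemma tree_perm_avoids132 T : avoids132 (tree_perm T).
Proof. by apply/oneline_avoids132; rewrite oneline_tree_perm; apply: word_avoids132. Qed.

Definition perm_of_tree T : {p : 'S_n | avoids132 p} :=
  exist (fun p => avoids132 p) _ (tree_perm_avoids132 T).

Lemma word_tree_of_oneline (p : {p : 'S_n | avoids132 p}) :
  word (tree_of n.+1 (oneline (sval p))) = oneline (sval p).
Proof.
apply: word_tree_of; rewrite ?size_oneline ?perm_iota_oneline //.
exact/oneline_avoids132/(svalP p).
Qed.

Lemma edges_tree_of_oneline (p : {p : 'S_n | avoids132 p}) :
  edges (tree_of n.+1 (oneline (sval p))) = n.
Proof. by rewrite -size_word word_tree_of_oneline size_oneline. Qed.

Definition tree_of_perm p : {T : ptree | edges T = n} :=
  exist (fun T => edges T = n) _ (edges_tree_of_oneline p).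

Lemma perm_of_treeK : cancel perm_of_tree tree_of_perm.
Proof.
move=> T; apply: edges_sig_inj; change (tree_of n.+1 (oneline (tree_perm T)) = sval T).
by rewrite oneline_tree_perm tree_of_word // (svalP T).
Qed.

Lemma tree_of_permK : cancel tree_of_perm perm_of_tree.
Proof.
move=> p; apply/val_inj/oneline_inj.
change (oneline (tree_perm (tree_of_perm p)) = oneline (sval p)).
by rewrite oneline_tree_perm word_tree_of_oneline.
Qed.

End TreePermBijection.

Theorem mainTheorem11 (n : nat) (hn : 1 <= n) :
  exists psi : {T : ptree | edges T = n} -> {p : 'S_n | avoids132 p},
    bijective psi /\
    forall T : {T : ptree | edges T = n},
      young_leaves (proj1_sig T) = ddes (n.+1 :: oneline (proj1_sig (psi T))) /\
      old_leaves (proj1_sig T) = asc_runs (rcons (oneline (proj1_sig (psi T))) n.+1).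
Proof.
exists (@perm_of_tree n); split; first exact: Bijective (@perm_of_treeK n) (@tree_of_permK n).
move=> T; rewrite /= oneline_tree_perm.
by split; [apply: young_leaves_word | apply: old_leaves_word]; rewrite (svalP T).
Qed.
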